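(* Suppose $k\ge2$ and $n\ge k+2$. Then for every $1\le\ell\le k+1$, $$\mathrm{Ker}(\Theta_1)\subset\mathrm{Ker}(\Theta_\ell)$$ as subgroups of $H^*\otimes_\mathbb{Z}\mathcal{L}_n(k+1)$ (with $\Theta_\ell$ restricted to $H^*\otimes_\mathbb{Z}\mathcal{L}_n(k+1)$).
   Context: $F_n$ is the free group of rank $n$, $H=F_n/[F_n,F_n]\cong\mathbb{Z}^n$, $H^*=\mathrm{Hom}(H,\mathbb{Z})$. $\mathcal{L}_n(m)\subset H^{\otimes m}$ is the degree-$m$ part of the free Lie algebra on $H$, i.e. the $\mathbb{Z}$-span of left-normed brackets $[a_1,\dots,a_m]$ computed with $[x,y]=x\otimes y-y\otimes x$ (equivalently the $m$th graded quotient of the lower central series of $F_n$). For $m\ge0$, $\mathcal{C}_n(m)$ is the quotient of $H^{\otimes m}$ by the subgroup generated by all $a_1\otimes a_2\otimes\cdots\otimes a_m-a_2\otimes\cdots\otimes a_m\otimes a_1$ ($\mathcal{C}_n(0)=\mathbb{Z}$), with projection $\pi_m$. For $1\le\ell\le k+1$: $\Phi_{1,\ell+1}:H^*\otimes H^{\otimes k+1}\to H^{\otimes k}$, $f\otimes a_1\otimes\cdots\otimes a_{k+1}\mapsto f(a_\ell)\,a_1\otimes\cdots\otimes\widehat{a_\ell}\otimes\cdots\otimes a_{k+1}$; $\varpi_\ell:H^{\otimes k}\to\mathcal{C}_n(\ell-1)\otimes\mathcal{C}_n(k-\ell+1)$, $a_1\otimes\cdots\otimes a_k\mapsto\pi_{\ell-1}(a_1\otimes\cdots\otimes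 a_{\ell-1})\otimes\pi_{k-\ell+1}(a_\ell\otimes\cdots\otimes a_k)$; and $\Theta_\ell=\varpi_\ell\circ\Phi_{1,\ell+1}$. (So $\Theta_1=\pi_k\circ\Phi_{1,2}$ up to the identification $\mathbb{Z}\otimes\mathcal{C}_n(k)=\mathcal{C}_n(k)$.) *)

From HB Require Import structures.
From mathcomp Require Import all_boot all_order all_algebra.
Set Implicit Arguments. Unset Strict Implicit. Unset Printing Implicit Defensive.
Import GRing.Theory.
Local Open Scope ring_scope.

(* H = Z^n with basis e_0..e_{n-1} (indexed by 'I_n); H^* has dual basis e_i^*.
   H^{(x)m} is the free Z-module on words of length m: coefficient functions
   m.-tuple 'I_n -> int.  H^* (x) H^{(x)m} is free on pairs (i, word). *)
Definition tens (n m : nat) := {ffun m.-tuple 'I_n -> int}.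
Definition dtens (n m : nat) := {ffun 'I_n * m.-tuple 'I_n -> int}.

Definition in_span (I : finType) (V : zmodType) (g : I -> V) (x : V) : Prop :=
  exists c : I -> int, x = \sum_(i : I) g i *~ c i.

(* Expansion of the left-normed bracket [a1,...,am] (with [x,y] = x(x)y - y(x)x)
   as a list of signed words (coefficient, word). *)
Definition brk_step (n : nat) (acc : seq (int * seq 'I_n)) (b : 'I_n) :=
  [seq (p.1, rcons p.2 b) | p <- acc] ++ [seq (- p.1, b :: p.2) | p <- acc].

Definition brk (n : nat) (s : seq 'I_n) : seq (int * seq 'I_n) :=
  if s is a :: s' then foldl (@brk_step n) [:: (1, [:: a])] s' else [::].

Definition lie_bracket (n m : nat) (w : m.-tuple 'I_n) : tens n m :=
  [ffun v : m.-tuple 'I_n =>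
     \sum_(p <- brk (tval w)) (if p.2 == tval v then p.1 else 0)].

(* Generators e_i^* (x) [e_{w1},...,e_{w(k+1)}] of H^* (x) L_n(k+1). *)
Definition lie_gen (n k : nat) (iw : 'I_n * (k.+1).-tuple 'I_n) : dtens n k.+1 :=
  [ffun jv : 'I_n * (k.+1).-tuple 'I_n =>
     if jv.1 == iw.1 then lie_bracket iw.2 jv.2 else 0].

(* Phi_{1,l+1} : H^* (x) H^{(x)(k+1)} -> H^{(x)k}, extended Z-linearly from
   e_i^* (x) e_{a1} (x) ... (x) e_{a(k+1)} |-> e_i^*(e_{al}) e_{a1}..^e_{al}^..e_{a(k+1)}. *)
Definition Phi (n k l : nat) (x : dtens n k.+1) : tens n k :=
  [ffun v : k.-tuple 'I_n =>
     \sum_(iw : 'I_n * (k.+1).-tuple 'I_n)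
        (if (nth iw.1 (tval iw.2) l.-1 == iw.1) &&
            (take l.-1 (tval iw.2) ++ drop l (tval iw.2) == tval v)
         then x iw else 0)].

(* Generators of the kernel of
     varpi_l : H^{(x)k} = H^{(x)p} (x) H^{(x)(k-p)} -> C_n(p) (x) C_n(k-p),  p = l-1,
   namely (a1..ap - a2..ap a1) (x) b  and  a (x) (b1..bq - b2..bq b1),
   on basis words u (first component) with the boolean choosing prefix/suffix. *)
Definition rot_part (n p : nat) (pre : bool) (u : seq 'I_n) : seq 'I_n :=
  if pre then rot 1 (take p u) ++ drop p u else take p u ++ rot 1 (drop p u).

Definition cyc_rel (n k p : nat) (ub : k.-tuple 'I_n * bool) : tens n k :=
  [ffun v : k.-tuple 'I_n =>
     (if tval v == tval ub.1 then 1 else 0) -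
     (if tval v == rot_part p ub.2 (tval ub.1) then 1 else 0)].

(* x in Ker(Theta_l) = Ker(varpi_l o Phi_{1,l+1}). *)
Definition in_ker_Theta (n k l : nat) (x : dtens n k.+1) : Prop :=
  in_span (@cyc_rel n k l.-1) (Phi l x).

(* Write x = sum_i e_i^* (x) P_i and read each P_i in L_n(k+1) as a coefficient
   function on words.  Lie elements satisfy
     <P, u c w> = (-1)^|u| <P, c (rev u ш w)>
   and are orthogonal to every proper shuffle (Ree); both hold for letters and
   survive bracketing with a letter.  Hence, for v = v' v'' with |v'| = l-1,
     Phi_{1,l+1}(x)(v) = (-1)^(l-1) <Phi_{1,2}(x), rev v' ш v''>.
   A tensor lies in Ker varpi_l iff its coefficient sums over the orbits of
   (rotations of v') x (rotations of v'') vanish.  Summed over such an orbit, the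
   shuffle pairing is a rotation-invariant functional of Phi_{1,2}(x); it therefore
   vanishes on Ker pi_k, which contains Phi_{1,2}(x) when x is in Ker Theta_1. *)

From HB Require Import structures.
From mathcomp Require Import all_boot all_order all_algebra.
From mathcomp Require Import ring.
Set Implicit Arguments. Unset Strict Implicit. Unset Printing Implicit Defensive.
Import GRing.Theory.
Local Open Scope ring_scope.

Fixpoint words (T : finType) (N : nat) : seq (seq T) :=
  if N is N'.+1 then [seq c :: s | c <- index_enum T, s <- words T N'] else [:: [::]].

Lemma mem_words (T : finType) N (s : seq T) : (s \in words T N) = (size s == N).
Proof.
elim: N s => [|N IH] [|c s] //=.
- by apply/allpairsP => -[[c' s'] [_ _]].
- apply/allpairsP/idP => [[[c' s'] [_ Hs /= [_ ->]]]|Hs].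
    by move: Hs; rewrite IH.
  by exists (c, s); split => //; rewrite /= IH.
Qed.

Lemma words_uniq (T : finType) N : uniq (words T N).
Proof.
elim: N => [|N IH] //=; apply: allpairs_uniq => //; first exact: index_enum_uniq.
by move=> [c s] [c' s'] _ _ /= [-> ->].
Qed.

Lemma perm_words_map (T : finType) N (f g : seq T -> seq T) :
  cancel g f -> injective f -> (forall s, size (g s) = size s) ->
  (forall s, size (f s) = size s) ->
  perm_eq (words T N) (map f (words T N)).
Proof.
move=> gK fI sg sf; apply: uniq_perm; first exact: words_uniq.
  by rewrite map_inj_uniq // words_uniq.
move=> s; rewrite mem_words; apply/idP/idP => [Hs|/mapP [t Ht ->]].
  by rewrite -(gK s) map_f // mem_words sg.
by rewrite sf -mem_words.
Qed.

Lemma sum_words_rot (R : nmodType) (T : finType) N (F : seq T -> R) :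
  \sum_(q <- words T N) F (rot 1 q) = \sum_(q <- words T N) F q.
Proof.
rewrite [RHS](perm_big _ (perm_words_map N (@rotrK 1 _) (@rot_inj 1 _)
  (@size_rotr 1 _) (@size_rot 1 _))).
by rewrite big_map.
Qed.

Section ShuffleSum.
Variables (R : ringType) (T : finType).
Implicit Types (G F : seq T -> R) (a b z : seq T).

(* A word q over [bool * T] encodes an interleaving of a (the letters tagged
   true) with b, so this is G summed over the shuffle product of a and b. *)
Definition shuffle_sum G a b : R :=
  \sum_(q <- words (bool * T)%type (size a + size b))
    (if (mask (map fst q) (map snd q) == a) &&
        (mask (map negb (map fst q)) (map snd q) == b)
     then G (map snd q) else 0).

Lemma eq_shuffle_sum G F a b :
  (forall z, size z = (size a + size b)%N -> G z = F z) ->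
  shuffle_sum G a b = shuffle_sum F a b.
Proof.
move=> GF; apply: eq_big_seq => q; rewrite mem_words => /eqP Hq.
by case: ifP => // _; rewrite GF // size_map.
Qed.

Lemma shuffle_sum0 a b : shuffle_sum (fun _ => 0) a b = 0.
Proof. by rewrite /shuffle_sum big1 // => q _; case: ifP. Qed.

Lemma shuffle_sumB G F a b :
  shuffle_sum (fun z => G z - F z) a b = shuffle_sum G a b - shuffle_sum F a b.
Proof.
by rewrite /shuffle_sum -sumrB; apply: eq_bigr => q _; case: ifP; rewrite ?subr0.
Qed.

Lemma shuffle_sumMl c G a b : shuffle_sum (fun z => c * G z) a b = c * shuffle_sum G a b.
Proof. by rewrite /shuffle_sum mulr_sumr; apply: eq_bigr => q _; case: ifP; rewrite ?mulr0. Qed.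

Lemma shuffle_sum_sum (J : finType) (H : J -> seq T -> R) a b :
  shuffle_sum (fun z => \sum_(j : J) H j z) a b = \sum_(j : J) shuffle_sum (H j) a b.
Proof.
rewrite /shuffle_sum exchange_big /=; apply: eq_bigr => q _.
by case: ifP => _ //; rewrite big1.
Qed.

Lemma shuffle_sum_if (B : bool) G a b :
  shuffle_sum (fun z => if B then G z else 0) a b = if B then shuffle_sum G a b else 0.
Proof. by case: B; [apply: eq_shuffle_sum | exact: shuffle_sum0]. Qed.

Lemma shuffle_sum_cons G a b : a ++ b != [::] ->
  shuffle_sum G a b =
    (if a is x :: a' then shuffle_sum (fun z => G (x :: z)) a' b else 0) +
    (if b is y :: b' then shuffle_sum (fun z => G (y :: z)) a b' else 0).
Proof.
move=> ab0; have [N HN] : exists N, (size a + size b = N.+1)%N.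
  by exists (size a + size b).-1; rewrite prednK // lt0n -size_cat size_eq0.
have sum_tagged (H : bool * T -> R) :
    \sum_(tc : bool * T) H tc = \sum_(c : T) H (true, c) + \sum_(c : T) H (false, c).
  rewrite (eq_bigr (fun tc => H (tc.1, tc.2))); last by case.
  by rewrite -(pair_bigA _ (fun t c => H (t, c))) big_bool.
rewrite /shuffle_sum HN /= big_allpairs_dep sum_tagged /=; congr (_ + _).
- case: a ab0 HN => [|x a'] _ /=.
    by move=> _; rewrite big1 // => c _; rewrite big1 // => q _; rewrite andbF.
  rewrite addSn => -[->]; rewrite (bigD1 x) //= [X in _ + X]big1 ?addr0.
    by apply: eq_bigr => q _; rewrite eqseq_cons eqxx.
  by move=> c /negPf Hc; rewrite big1 // => q _; rewrite eqseq_cons Hc.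
- case: b ab0 HN => [|y b'] _ /=.
    by move=> _; rewrite big1 // => c _; rewrite big1 // => q _; rewrite andbF.
  rewrite addnS => -[->]; rewrite (bigD1 y) //= [X in _ + X]big1 ?addr0.
    by apply: eq_bigr => q _; rewrite eqseq_cons eqxx.
  by move=> c /negPf Hc; rewrite big1 // => q _; rewrite eqseq_cons Hc andbF.
Qed.

Lemma shuffle_sum_rev G a b :
  shuffle_sum G a b = shuffle_sum (fun z => G (rev z)) (rev a) (rev b).
Proof.
rewrite /shuffle_sum !size_rev.
rewrite [RHS](perm_big _ (perm_words_map _ revK (can_inj revK) (@size_rev _) (@size_rev _))).
rewrite big_map; apply: eq_bigr => q _.
by rewrite !map_rev -!rev_mask ?size_map // !(inj_eq (can_inj revK)) revK.
Qed.

Lemma shuffle_sum_rcons G a b x y :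
  shuffle_sum G (rcons a x) (rcons b y) =
  shuffle_sum (fun z => G (rcons z x)) a (rcons b y) +
  shuffle_sum (fun z => G (rcons z y)) (rcons a x) b.
Proof.
rewrite shuffle_sum_rev !rev_rcons shuffle_sum_cons //=.
rewrite [shuffle_sum (fun z => G (rcons z x)) _ _]shuffle_sum_rev.
rewrite [shuffle_sum (fun z => G (rcons z y)) _ _]shuffle_sum_rev !rev_rcons.
by congr (_ + _); apply: eq_shuffle_sum => z _; rewrite rev_cons.
Qed.

Lemma shuffle_sum_nill G b : shuffle_sum G [::] b = G b.
Proof.
elim: b G => [|y b IH] G; first by rewrite /shuffle_sum big_seq1.
by rewrite shuffle_sum_cons //= add0r IH.
Qed.

Lemma shuffle_sum_nilr G a : shuffle_sum G a [::] = G a.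
Proof.
elim: a G => [|x a IH] G; first by rewrite /shuffle_sum big_seq1.
by rewrite shuffle_sum_cons //= addr0 IH.
Qed.

End ShuffleSum.

Section LieLaws.
Variables (R : comRingType) (T : finType).
Implicit Types (P Q : seq T -> R) (a b u w y z : seq T).

Definition extraction_law P := forall u c w,
  P (u ++ c :: w) = (-1) ^+ size u * shuffle_sum (fun z => P (c :: z)) (rev u) w.

Definition shuffle_orth P :=
  forall a b, a != [::] -> b != [::] -> shuffle_sum P a b = 0.

Definition rmul_letter P c y : R :=
  if rev y is d :: r then (if d == c then P (rev r) else 0) else 0.

Definition lmul_letter c P y : R :=
  if y is d :: r then (if d == c then P r else 0) else 0.

Definition bracket_letter P c y := rmul_letter P c y - lmul_letter c P y.

Lemma rmul_letter_rcons P c y d : rmul_letter P c (rcons y d) = if d == c then P y else 0.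
Proof. by rewrite /rmul_letter rev_rcons revK. Qed.

Lemma eq_extraction_law P Q : P =1 Q -> extraction_law P -> extraction_law Q.
Proof.
move=> PQ lawP u c w; rewrite -PQ lawP.
by congr (_ * _); apply: eq_shuffle_sum => z _; exact: PQ.
Qed.

Lemma eq_shuffle_orth P Q : P =1 Q -> shuffle_orth P -> shuffle_orth Q.
Proof.
move=> PQ orthP a b a0 b0; rewrite -(orthP a b a0 b0).
by apply: eq_shuffle_sum => z _; rewrite PQ.
Qed.

Lemma extraction_law_letter c : extraction_law (fun y => (y == [:: c])%:R).
Proof.
move=> u d w; case E: (size u + size w)%N => [|N].
  by case: u E => [|? ?] //; case: w => [|? ?] //= _; rewrite shuffle_sum_nill mul1r.
have -> : (u ++ d :: w == [:: c]) = false.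
  by apply/negP => /eqP /(congr1 size); rewrite size_cat /= addnS E.
rewrite (@eq_shuffle_sum _ _ _ (fun _ => 0)) ?shuffle_sum0 ?mulr0 // => z.
by rewrite size_rev E; case: z => //= e z' _; rewrite eqseq_cons andbC.
Qed.

Lemma shuffle_orth_letter c : shuffle_orth (fun y => (y == [:: c])%:R).
Proof.
move=> [|x a] [|y b] // _ _; rewrite (@eq_shuffle_sum _ _ _ (fun _ => 0)) ?shuffle_sum0 //.
by case=> [|d [|e z]] //=; rewrite ?eqseq_cons ?andbF // addSn addnS => /eqP.
Qed.

Lemma extraction_law_lincomb (J : finType) (H : J -> seq T -> R) (c : J -> R) :
  (forall j, extraction_law (H j)) ->
  extraction_law (fun z => \sum_(j : J) c j * H j z).
Proof.
move=> lawH u d w; rewrite (shuffle_sum_sum (fun j z => c j * H j (d :: z))) mulr_sumr.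
by apply: eq_bigr => j _; rewrite lawH shuffle_sumMl mulrCA.
Qed.

Lemma extraction_law_rev P s : extraction_law P -> s != [::] ->
  P s = - (-1) ^+ size s * P (rev s).
Proof.
move=> lawP; case/lastP: s => [//|s d] _.
rewrite -cats1 lawP shuffle_sum_nilr size_cat rev_cat /= addn1 exprS.
by rewrite mulN1r opprK.
Qed.

Lemma extraction_law_bracket P c : extraction_law P -> shuffle_orth P ->
  extraction_law (bracket_letter P c).
Proof.
move=> lawP orthP u d w; rewrite shuffle_sumB.
have -> : shuffle_sum (fun z => lmul_letter c P (d :: z)) (rev u) w =
          if d == c then shuffle_sum P (rev u) w else 0.
  by rewrite -shuffle_sum_if; apply: eq_shuffle_sum.
rewrite /bracket_letter; case/lastP: w => [|w' e].
- rewrite !shuffle_sum_nilr cats1 rmul_letter_rcons.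
  case: u => [|e u'].
    by rewrite /rmul_letter /lmul_letter /= mul1r; case: (d == c); rewrite ?subrr.
  rewrite rev_cons -rcons_cons rmul_letter_rcons /= (extraction_law_rev (s := e :: u')) //.
  rewrite -cats1 lawP shuffle_sum_nilr exprS rev_cons.
  by case: (d == c); case: (e == c); rewrite /=; ring.
- case: u => [|e' u']; first by rewrite /= !shuffle_sum_nill expr0 mul1r.
  rewrite rev_cons shuffle_sum_rcons.
  rewrite orthP -?size_eq0 ?size_rcons //.
  under eq_shuffle_sum => z _ do rewrite -rcons_cons rmul_letter_rcons.
  under [X in _ + X - _]eq_shuffle_sum => z _ do rewrite -rcons_cons rmul_letter_rcons.
  rewrite !shuffle_sum_if -(rcons_cons d w' e) -rcons_cat rmul_letter_rcons /=.
  rewrite rcons_cat rcons_cons -cat_cons (lawP (e' :: u') d w') (lawP u' d (rcons w' e)).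
  rewrite rev_cons exprS /=.
  by case: (d == c); case: (e' == c); case: (e == c); rewrite /=; ring.
Qed.

Lemma if_head_last (F : seq T -> R) c x x' a a' :
  (forall a, a != [::] -> F a = 0) -> x :: a = rcons a' x' ->
  (if x == c then F a else 0) = (if x' == c then F a' else 0).
Proof.
move=> F0; case: a' => [|x3 a3] /=; first by move=> [-> ->].
case: a => [|x2 a2]; first by move/(congr1 size); rewrite /= size_rcons.
by move=> _; rewrite !F0 //; case: ifP; case: ifP.
Qed.

Lemma shuffle_orth_bracket P c : shuffle_orth P -> shuffle_orth (bracket_letter P c).
Proof.
move=> orthP a b a0 b0; rewrite shuffle_sumB.
case: a a0 => // x a _; case: b b0 => // y b _.
have Ea := lastI x a; have Eb := lastI y b.
set a' := belast x a in Ea *; set x' := last x a in Ea *.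
set b' := belast y b in Eb *; set y' := last y b in Eb *.
have -> : shuffle_sum (lmul_letter c P) (x :: a) (y :: b) =
    (if x == c then shuffle_sum P a (y :: b) else 0) +
    (if y == c then shuffle_sum P (x :: a) b else 0).
  by rewrite shuffle_sum_cons //= -!shuffle_sum_if.
have -> : shuffle_sum (rmul_letter P c) (x :: a) (y :: b) =
    (if x' == c then shuffle_sum P a' (y :: b) else 0) +
    (if y' == c then shuffle_sum P (x :: a) b' else 0).
  rewrite {1}Ea {1}Eb shuffle_sum_rcons -Ea -Eb -!shuffle_sum_if.
  by congr (_ + _); apply: eq_shuffle_sum => z _; rewrite rmul_letter_rcons.
rewrite (@if_head_last (shuffle_sum P ^~ (y :: b)) c x x' a a') //; last first.
  by move=> a1 a10; rewrite orthP.
rewrite (@if_head_last (shuffle_sum P (x :: a)) c y y' b b') ?subrr //.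
by move=> b1 b10; rewrite orthP.
Qed.

End LieLaws.

Section Brackets.
Variable n : nat.

Definition word_coef (s : seq (int * seq 'I_n)) (y : seq 'I_n) : int :=
  \sum_(p <- s) (if p.2 == y then p.1 else 0).

Lemma lie_bracketE m (w : m.-tuple 'I_n) v : lie_bracket w v = word_coef (brk w) v.
Proof. by rewrite ffunE. Qed.

Lemma word_coef_brk_step s c : word_coef (brk_step s c) =1 bracket_letter (word_coef s) c.
Proof.
move=> y; rewrite /word_coef /brk_step big_cat !big_map /=; congr (_ + _).
- case/lastP: y => [|y d]; first by rewrite big1 // => -[? [|? ?]].
  rewrite rmul_letter_rcons; under eq_bigr do rewrite eqseq_rcons.
  rewrite [c == d]eq_sym; case: (d == c); last by rewrite big1 // => p _; rewrite andbF.
  by apply: eq_bigr => p _; rewrite andbT.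
- case: y => [|d y] /=; first by rewrite big1 ?oppr0.
  under eq_bigr do rewrite eqseq_cons.
  rewrite [c == d]eq_sym; case: (d == c); last by rewrite big1 ?oppr0.
  by rewrite -sumrN; apply: eq_bigr => p _ /=; case: ifP; rewrite ?oppr0.
Qed.

Lemma lie_bracket_laws (s : seq 'I_n) :
  extraction_law (word_coef (brk s)) /\ shuffle_orth (word_coef (brk s)).
Proof.
pose laws (P : seq 'I_n -> int) := extraction_law P /\ shuffle_orth P.
have eq_laws (P Q : seq 'I_n -> int) : P =1 Q -> laws P -> laws Q.
  by move=> PQ [lawP orthP]; split; [apply: eq_extraction_law lawP | apply: eq_shuffle_orth orthP].
case: s => [|c s] /=.
  apply: (@eq_laws (fun=> 0)) => [y|]; first by rewrite /word_coef big_nil.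
  by split=> [u d w | a b _ _]; rewrite shuffle_sum0 ?mulr0.
have : laws (word_coef [:: (1, [:: c])]).
  apply: eq_laws (conj (extraction_law_letter _ c) (shuffle_orth_letter _ c)) => y.
  by rewrite /word_coef big_seq1 /= eq_sym; case: eqP.
elim: s [:: (1, [:: c])] => [|d s IH] acc //= [lawA orthA]; apply: IH.
apply: eq_laws (conj (extraction_law_bracket d lawA orthA) (shuffle_orth_bracket d orthA)).
by move=> y; rewrite word_coef_brk_step.
Qed.

End Brackets.

Section RotationClasses.
Variable T : eqType.
Implicit Types s t u : seq T.

Definition roteq s t := [exists i : 'I_(size s).+1, rot i s == t].

Lemma roteqP s t : reflect (exists j, t = rot j s) (roteq s t).
Proof.
apply: (iffP existsP) => [[i /eqP <-]|[j ->]]; first by exists i.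
by rewrite rot_minn; exists (Ordinal (leq_ltn_trans (geq_minr j (size s)) (ltnSn _))).
Qed.

Lemma roteq_rot j s : roteq s (rot j s).
Proof. by apply/roteqP; exists j. Qed.

Lemma roteq_refl s : roteq s s.
Proof. by apply/roteqP; exists 0%N; rewrite rot0. Qed.

Lemma roteq_sym s t : roteq s t -> roteq t s.
Proof.
move/roteqP => [j ->]; apply/roteqP; exists (size (rot j s) - j)%N.
by rewrite -/(rotr j (rot j s)) rotK.
Qed.

Lemma roteq_trans s t u : roteq s t -> roteq t u -> roteq s u.
Proof. by move/roteqP => [j ->] /roteqP [i ->]; rewrite rot_rot_add roteq_rot. Qed.

Lemma roteq_rev s t : roteq s t -> roteq (rev s) (rev t).
Proof. by move/roteqP => [j ->]; rewrite rev_rot roteq_rot. Qed.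

Definition split_roteq p s t :=
  roteq (take p s) (take p t) && roteq (drop p s) (drop p t).

Lemma split_roteq_refl p s : split_roteq p s s.
Proof. by rewrite /split_roteq !roteq_refl. Qed.

Lemma split_roteq_sym p s t : split_roteq p s t -> split_roteq p t s.
Proof. by case/andP => H1 H2; apply/andP; split; apply: roteq_sym. Qed.

Lemma split_roteq_trans p s t u :
  split_roteq p s t -> split_roteq p t u -> split_roteq p s u.
Proof.
case/andP => H1 H2 /andP [H3 H4].
by rewrite /split_roteq (roteq_trans H1 H3) (roteq_trans H2 H4).
Qed.

Lemma split_roteq_r p s t u : split_roteq p t u -> split_roteq p s t = split_roteq p s u.
Proof.
move=> Htu; apply/idP/idP => Hs; first exact: split_roteq_trans Hs Htu.
exact: split_roteq_trans Hs (split_roteq_sym Htu).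
Qed.

Lemma split_roteq_l p s t u : split_roteq p s t -> split_roteq p s u = split_roteq p t u.
Proof.
move=> Hst; apply/idP/idP => Hu; first exact: split_roteq_trans (split_roteq_sym Hst) Hu.
exact: split_roteq_trans Hst Hu.
Qed.

End RotationClasses.

Section Span.
Variables (I : finType) (V : zmodType) (g : I -> V).

Lemma in_span0 : in_span g 0.
Proof. by exists (fun _ => 0); rewrite big1 // => i _; rewrite mulr0z. Qed.

Lemma in_spanD x y : in_span g x -> in_span g y -> in_span g (x + y).
Proof.
move=> [c1 ->] [c2 ->]; exists (fun i => c1 i + c2 i).
by rewrite -big_split; apply: eq_bigr => i _; rewrite mulrzDr.
Qed.

Lemma in_spanZ x m : in_span g x -> in_span g (x *~ m).
Proof.
move=> [c ->]; exists (fun i => c i * m).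
by rewrite mulrz_suml; apply: eq_bigr => i _; rewrite mulrzA.
Qed.

Lemma in_span_sum (J : finType) (F : J -> V) :
  (forall j, in_span g (F j)) -> in_span g (\sum_(j : J) F j).
Proof.
move=> H; elim: (index_enum J) => [|j r IH]; first by rewrite big_nil; apply: in_span0.
by rewrite big_cons; apply: in_spanD.
Qed.

Lemma in_span_gen i : in_span g (g i).
Proof.
exists (fun j => (j == i)%:R); rewrite (bigD1 i) //= eqxx mulr1z big1 ?addr0 //.
by move=> j /negPf ->; rewrite mulr0z.
Qed.

End Span.

Section CyclicRelations.
Variables n k p : nat.
Hypothesis p_le_k : (p <= k)%N.
Notation tup := (k.-tuple 'I_n).
Notation cyc_span := (in_span (@cyc_rel n k p)).

Definition tdelta (s : seq 'I_n) : tens n k := [ffun v : tup => if tval v == s then 1 else 0].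

Lemma cyc_span_delta_trans s t u : cyc_span (tdelta s - tdelta t) ->
  cyc_span (tdelta t - tdelta u) -> cyc_span (tdelta s - tdelta u).
Proof. by move=> st tu; rewrite -[_ - tdelta u](subrKA (tdelta t)); apply: in_spanD. Qed.

Lemma cyc_span_rot_part b s : size s = k -> cyc_span (tdelta s - tdelta (rot_part p b s)).
Proof.
move=> /eqP sz_s; have -> : tdelta s - tdelta (rot_part p b s) = cyc_rel p (Tuple sz_s, b).
  by apply/ffunP => v; rewrite !ffunE.
exact: in_span_gen.
Qed.

Lemma cyc_span_rot_prefix (pre suf : seq 'I_n) i : size pre = p -> size (pre ++ suf) = k ->
  cyc_span (tdelta (pre ++ suf) - tdelta (rot i pre ++ suf)).
Proof.
move=> sz_pre sz; rewrite rot_minn; elim: (minn i _) (geq_minr i (size pre)) => [|j IH] j_le.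
  by rewrite rot0 subrr; apply: in_span0.
apply: cyc_span_delta_trans (IH (ltnW j_le)) _; rewrite (rotS j_le).
have -> : rot 1 (rot j pre) ++ suf = rot_part p true (rot j pre ++ suf).
  by rewrite /rot_part take_size_cat ?drop_size_cat // size_rot.
by apply: cyc_span_rot_part; rewrite size_cat size_rot -size_cat.
Qed.

Lemma cyc_span_rot_suffix (pre suf : seq 'I_n) j : size pre = p -> size (pre ++ suf) = k ->
  cyc_span (tdelta (pre ++ suf) - tdelta (pre ++ rot j suf)).
Proof.
move=> sz_pre sz; rewrite rot_minn; elim: (minn j _) (geq_minr j (size suf)) => [|i IH] i_le.
  by rewrite rot0 subrr; apply: in_span0.
apply: cyc_span_delta_trans (IH (ltnW i_le)) _; rewrite (rotS i_le).
have -> : pre ++ rot 1 (rot i suf) = rot_part p false (pre ++ rot i suf).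
  by rewrite /rot_part take_size_cat ?drop_size_cat.
by apply: cyc_span_rot_part; rewrite size_cat size_rot -size_cat.
Qed.

Lemma cyc_span_split_roteq (s t : seq 'I_n) : size s = k -> split_roteq p s t ->
  cyc_span (tdelta s - tdelta t).
Proof.
move=> sz_s /andP [/roteqP [i Ei] /roteqP [j Ej]].
have sz_pre : size (take p s) = p by rewrite size_takel ?sz_s.
have sz : size (take p s ++ drop p s) = k by rewrite cat_take_drop.
rewrite -(cat_take_drop p s) -(cat_take_drop p t) Ei Ej.
apply: cyc_span_delta_trans (cyc_span_rot_prefix i _ _) _ => //.
by apply: cyc_span_rot_suffix; rewrite ?size_rot // size_cat size_rot -size_cat.
Qed.

Definition class_rep (v : tup) : tup := odflt v [pick v' : tup | split_roteq p v v'].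

Lemma class_rep_roteq (v : tup) : split_roteq p v (class_rep v).
Proof. by rewrite /class_rep; case: pickP => [v' ->|_] //=; apply: split_roteq_refl. Qed.

Lemma class_rep_eq (v v' : tup) : split_roteq p v v' -> class_rep v = class_rep v'.
Proof.
move=> vv'; rewrite /class_rep (eq_pick (fun u : tup => split_roteq_l (tval u) vv')).
by case: pickP => [//|no_pick]; have := no_pick v'; rewrite split_roteq_refl.
Qed.

Lemma tens_expand (y : tens n k) : y = \sum_(v : tup) tdelta v *~ y v.
Proof.
apply/ffunP => w; rewrite sum_ffunE (bigD1 w) //= ffunMzE ffunE eqxx mulrzz mul1r.
rewrite big1 ?addr0 // => v vw; rewrite ffunMzE ffunE val_eqE eq_sym.
by rewrite (negPf vw) mul0rz.
Qed.

Lemma sum_class_rep (y : tens n k) :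
  (forall w : tup, \sum_(v : tup | split_roteq p w v) y v = 0) ->
  \sum_(v : tup) tdelta (class_rep v) *~ y v = 0.
Proof.
move=> class_sum0; apply/ffunP => w; rewrite sum_ffunE ffunE.
under eq_bigr do rewrite ffunMzE ffunE.
case: (pickP (fun v0 : tup => class_rep v0 == w)) => [v0 /eqP <- | no_rep]; last first.
  by rewrite big1 // => v _; rewrite val_eqE eq_sym no_rep mul0rz.
rewrite -[RHS](class_sum0 v0) [RHS]big_mkcond; apply: eq_bigr => v _.
have -> : (tval (class_rep v0) == class_rep v) = split_roteq p v0 v.
  apply/idP/idP => [/eqP/val_inj rep_eq | /class_rep_eq -> //].
  apply: split_roteq_trans (class_rep_roteq v0) _.
  by rewrite rep_eq; apply/split_roteq_sym/class_rep_roteq.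
by case: ifP => _; rewrite ?mul0rz ?intz.
Qed.

Lemma in_span_cyc_rel (y : tens n k) :
  (forall w : tup, \sum_(v : tup | split_roteq p w v) y v = 0) -> cyc_span y.
Proof.
move=> class_sum0.
have -> : y = \sum_(v : tup) (tdelta v - tdelta (class_rep v)) *~ y v +
              \sum_(v : tup) tdelta (class_rep v) *~ y v.
  by rewrite -big_split /=; under eq_bigr do rewrite -mulrzDl subrK; apply: tens_expand.
rewrite sum_class_rep // addr0; apply: in_span_sum => v; apply: in_spanZ.
by apply: cyc_span_split_roteq; rewrite ?size_tuple ?class_rep_roteq.
Qed.

End CyclicRelations.

Lemma eq_insert_at (T : eqType) p (i : T) (w v : seq T) :
  (p <= size v)%N -> size w = (size v).+1 ->
  ((nth i w p == i) && (take p w ++ drop p.+1 w == v)) = (w == take p v ++ i :: drop p v).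
Proof.
move=> p_le sz_w; apply/idP/eqP => [/andP [/eqP wp /eqP <-] | ->].
  have sz_take : size (take p w) = p by rewrite size_takel // sz_w ltnW.
  rewrite take_size_cat // drop_size_cat // -{1}wp -drop_nth ?cat_take_drop //.
  by rewrite sz_w ltnS.
rewrite nth_cat size_takel // ltnn subnn /= eqxx /=.
rewrite take_size_cat ?size_takel // -cat_rcons drop_size_cat ?size_rcons ?size_takel //.
by rewrite cat_take_drop.
Qed.

Section ThetaKernel.
Variables n k : nat.
Notation tup := (k.-tuple 'I_n).
Implicit Types (x : dtens n k.+1) (P : 'I_n -> seq 'I_n -> int).

Lemma lie_span_coef x : in_span (@lie_gen n k) x ->
  exists P, (forall i (w : (k.+1).-tuple 'I_n), x (i, w) = P i w) /\
            (forall i, extraction_law (P i)).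
Proof.
move=> [c ->]; exists (fun i y => \sum_g (if i == g.1 then c g else 0) * word_coef (brk g.2) y).
split=> [i w | i]; last first.
  by apply: extraction_law_lincomb => g; apply: (lie_bracket_laws _).1.
rewrite sum_ffunE; apply: eq_bigr => g _; rewrite ffunMzE ffunE /= lie_bracketE.
by case: ifP => _; rewrite ?mul0r ?mul0rz // mulrzz mulrC.
Qed.

Lemma Phi_insert l x P (v : tup) : (1 <= l <= k.+1)%N ->
  (forall i (w : (k.+1).-tuple 'I_n), x (i, w) = P i w) ->
  Phi l x v = \sum_(i : 'I_n) P i (take l.-1 v ++ i :: drop l.-1 v).
Proof.
case: l => // p /andP [_ p_le] xP; rewrite ltnS in p_le; rewrite /Phi ffunE /=.
pose F i (w : (k.+1).-tuple 'I_n) :=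
  if (nth i w p == i) && (take p w ++ drop p.+1 w == v) then x (i, w) else 0.
rewrite (eq_bigr (fun iw => F iw.1 iw.2)); last by case.
rewrite -(pair_bigA _ F); apply: eq_bigr => i _; rewrite /F.
have /eqP sz_ins : size (take p v ++ i :: drop p v) = k.+1.
  by rewrite size_cat /= size_takel ?size_tuple // addnS subnKC.
rewrite (bigD1 (Tuple sz_ins)) // big1 => [|w w_ne].
  by rewrite /= addr0 xP eq_insert_at ?(eqP sz_ins) ?size_tuple // eqxx.
rewrite eq_insert_at ?size_tuple //; case: eqP => // w_eq.
by case/eqP: w_ne; apply: val_inj.
Qed.

Definition contract_head P (z : seq 'I_n) : int := \sum_(i : 'I_n) P i (i :: z).

Lemma Phi_shuffle l x P (v : tup) : (1 <= l <= k.+1)%N ->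
  (forall i (w : (k.+1).-tuple 'I_n), x (i, w) = P i w) ->
  (forall i, extraction_law (P i)) ->
  Phi l x v = (-1) ^+ l.-1 *
    shuffle_sum (contract_head P) (rev (take l.-1 v)) (drop l.-1 v).
Proof.
move=> l_bounds xP lawP; have p_le : (l.-1 <= k)%N by case: l l_bounds => //= l /andP [].
rewrite (Phi_insert _ l_bounds xP).
under eq_bigr do rewrite lawP size_takel ?size_tuple //.
rewrite -mulr_sumr; congr (_ * _).
by rewrite (shuffle_sum_sum (fun i z => P i (i :: z))).
Qed.

Section ClassSums.
Variable p : nat.
Hypothesis p_le_k : (p <= k)%N.

Definition class_weight (w0 : tup) (q : seq (bool * 'I_n)) : int :=
  \sum_(v : tup | split_roteq p w0 v)
     (if (mask (map fst q) (map snd q) == rev (take p v)) &&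
         (mask (map negb (map fst q)) (map snd q) == drop p v) then 1 else 0).

Lemma class_weightE (w0 : tup) (A B : seq 'I_n) : (size A + size B)%N = k ->
  \sum_(v : tup | split_roteq p w0 v) (if (A == rev (take p v)) && (B == drop p v) then 1 else 0)
  = if (size A == p) && split_roteq p w0 (rev A ++ B) then 1 else 0 :> int.
Proof.
move=> sz_AB.
have split_eq (v : tup) : ((A == rev (take p v)) && (B == drop p v)) =
                          (size A == p) && (tval v == rev A ++ B).
  apply/andP/andP => [[/eqP -> /eqP ->]|[/eqP sz_A /eqP ->]].
    by rewrite size_rev size_takel ?size_tuple // revK cat_take_drop.
  by rewrite take_size_cat ?size_rev // drop_size_cat ?size_rev // revK !eqxx.
under eq_bigr do rewrite split_eq.
case: (boolP (size A == p)) => sz_A /=; last by rewrite big1.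
have /eqP sz : size (rev A ++ B) = k by rewrite size_cat size_rev.
rewrite big_mkcond (bigD1 (Tuple sz)) //= eqxx big1 ?addr0; first by case: ifP.
move=> v v_ne; have /negPf -> : tval v != rev A ++ B.
  by apply: contra v_ne => /eqP v_eq; apply/eqP/val_inj.
by case: ifP.
Qed.

Lemma class_weight_rot w0 q : size q = k -> class_weight w0 (rot 1 q) = class_weight w0 q.
Proof.
move=> sz_q; rewrite /class_weight !map_rot !mask_rot ?size_map //.
set A := mask _ _; set B := mask _ _.
have sz_AB : (size A + size B)%N = k.
  rewrite /A /B !size_mask ?size_map // [X in (_ + X)%N]count_map.
  by rewrite (count_predC id) size_map.
rewrite !class_weightE ?size_rot //; case: eqP => //= sz_A.
rewrite (@split_roteq_r _ p w0 _ (rev A ++ B)) //.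
rewrite /split_roteq !take_size_cat ?drop_size_cat ?size_rev ?size_rot //.
by apply/andP; split; [apply: roteq_rev|]; apply: roteq_sym; apply: roteq_rot.
Qed.

Lemma class_sum_shuffle (f : seq 'I_n -> int) (w0 : tup) :
  \sum_(v : tup | split_roteq p w0 v) shuffle_sum f (rev (take p v)) (drop p v) =
  \sum_(q <- words (bool * 'I_n)%type k) class_weight w0 q * f (map snd q).
Proof.
have sz (v : tup) : (size (rev (take p v)) + size (drop p v))%N = k.
  by rewrite size_rev size_takel ?size_tuple // subnKC.
under eq_bigr do rewrite /shuffle_sum sz.
rewrite exchange_big; apply: eq_bigr => q _; rewrite /class_weight mulr_suml.
by apply: eq_bigr => v _; case: ifP; rewrite ?mul1r ?mul0r.
Qed.

End ClassSums.

Lemma sum_weighted_cyc_rel0 (omega : seq (bool * 'I_n) -> int) (f : seq 'I_n -> int)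
  (y : tens n k) :
  (forall q, size q = k -> omega (rot 1 q) = omega q) ->
  in_span (@cyc_rel n k 0) y -> (forall z : tup, f z = y z) ->
  \sum_(q <- words (bool * 'I_n)%type k) omega q * f (map snd q) = 0.
Proof.
move=> omega_rot [d ->] fy.
pose delta (q : seq (bool * 'I_n)) (u : seq 'I_n) : int := if map snd q == u then 1 else 0.
rewrite (eq_big_seq (fun q => \sum_(ub : tup * bool)
    (omega q * (delta q ub.1 - delta q (rot_part 0 ub.2 ub.1))) *~ d ub)); last first.
  move=> q; rewrite mem_words => /eqP sz_q; have /eqP sz : size (map snd q) = k by rewrite size_map.
  rewrite (fy (Tuple sz)) sum_ffunE mulr_sumr; apply: eq_bigr => ub _.
  by rewrite ffunMzE ffunE mulrzAr.
rewrite exchange_big big1 // => -[u b] _; rewrite -mulrz_suml.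
rewrite [X in X *~ _](_ : _ = 0) ?mul0rz //.
case: b; rewrite /rot_part take0 drop0 /=.
  by rewrite big1 // => q _; rewrite subrr mulr0.
under eq_bigr do rewrite mulrBr; rewrite sumrB; apply/eqP; rewrite subr_eq0; apply/eqP.
rewrite -(sum_words_rot k (fun q => omega q * delta q (rot 1 u))).
apply: eq_big_seq => q; rewrite mem_words => /eqP sz_q.
by rewrite omega_rot // /delta map_rot (inj_eq (@rot_inj 1 _)).
Qed.

End ThetaKernel.

Local Close Scope ring_scope.
Unset Implicit Arguments.

Theorem mainTheorem7 (n k : nat) (hk : 2 <= k) (hn : k + 2 <= n)
  (l : nat) (hl1 : 1 <= l) (hl2 : l <= k.+1)
  (x : dtens n k.+1) (hx : in_span (@lie_gen n k) x) :
  in_ker_Theta 1 x -> in_ker_Theta l x.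
Proof.
have l_bounds : (1 <= l <= k.+1)%N by rewrite hl1 hl2.
have p_le_k : (l.-1 <= k)%N by rewrite -ltnS prednK.
have [P [xP lawP]] := lie_span_coef hx.
move=> ker1; apply: in_span_cyc_rel => // w0.
under eq_bigr do rewrite (Phi_shuffle _ l_bounds xP lawP).
rewrite -GRing.mulr_sumr class_sum_shuffle // (sum_weighted_cyc_rel0 _ ker1) ?GRing.mulr0 //.
  by move=> q; apply: class_weight_rot.
by move=> z; rewrite (Phi_insert _ _ xP) //= take0 drop0.
Qed.
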